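(* Let $G$ be a finite connected simple graph and let $\overrightarrow{G}$ be the directed graph obtained by replacing every edge $xy$ of $G$ by the two directed edges $\overrightarrow{xy}$ and $\overrightarrow{yx}$. Then the complex $\Delta(\overrightarrow{G})$ is pure if and only if $\mathrm{diam}(G)\leqslant 2$.
   Context: For a finite directed graph $D$, the complex of directed trees $\Delta(D)$ has the directed edges of $D$ as vertices, and its faces are the edge sets of directed forests in $D$ (vertex-disjoint unions of rooted directed trees; equivalently, edge sets in which every vertex has in-degree at most $1$ and there is no directed cycle). A simplicial complex is pure if all its maximal faces have the same dimension. $\mathrm{diam}(G)$ is the greatest distance between two vertices of $G$. *)

From mathcomp Require Import all_boot.
Set Implicit Arguments. Unset Strict Implicit. Unset Printing Implicit Defensive.

Definition simple_graph (T : finType) (e : rel T) : Prop :=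
  symmetric e /\ irreflexive e.

Definition connected_graph (T : finType) (e : rel T) : Prop :=
  forall x y : T, connect e x y.

Definition dist_le (T : finType) (e : rel T) (x y : T) (k : nat) : Prop :=
  exists p : seq T, [/\ path e x p, last x p = y & size p <= k].

Definition diam_le (T : finType) (e : rel T) (k : nat) : Prop :=
  forall x y : T, dist_le e x y k.

(* Directed graph: arc relation a on T; arcs are pairs (u,v) with a u v.
   The bidirected graph of G has arc set {(x,y) | e x y}, since e is symmetric. *)
Definition arcs (T : finType) (a : rel T) : {set T * T} :=
  [set uv | a uv.1 uv.2].

Definition indeg_le1 (T : finType) (F : {set T * T}) : bool :=
  [forall v : T, #|[set uv in F | uv.2 == v]| <= 1].

Definition acyclic_arcs (T : finType) (F : {set T * T}) : bool :=
  [forall uv in F, ~~ connect (fun x y => (x, y) \in F) uv.2 uv.1].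

(* Faces of the complex of directed trees Delta(D): edge sets of directed forests. *)
Definition dtree_face (T : finType) (a : rel T) (F : {set T * T}) : bool :=
  [&& F \subset arcs a, indeg_le1 F & acyclic_arcs F].

Definition maximal_face (T : finType) (a : rel T) (F : {set T * T}) : Prop :=
  dtree_face a F /\ forall F', dtree_face a F' -> F \subset F' -> F' = F.

Definition pure_dtree_complex (T : finType) (a : rel T) : Prop :=
  forall F1 F2, maximal_face a F1 -> maximal_face a F2 -> #|F1| = #|F2|.

From mathcomp Require Import all_boot.
From mathcomp Require Import zify.
Set Implicit Arguments. Unset Strict Implicit. Unset Printing Implicit Defensive.

(* Every face of Delta(D) has at least one root (a vertex of in-degree 0) and
   #|F| = #|T| - #roots, since F is determined by the heads of its arcs.
   An arc u -> v into a root v can be added to a face unless it closes a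
   cycle, so in a maximal face every root v reaches each neighbour of v.  If
   diam(G) <= 2, any two roots then reach a common vertex, which forces them to
   be equal; hence every maximal face is a spanning arborescence.  Conversely,
   if dist(x,y) > 2 the out-stars of x and y form a face with roots x and y; a
   maximal face containing it keeps both roots and is smaller than a spanning
   arborescence, which exists because G is connected. *)

Section DirectedForests.
Variable T : finType.
Implicit Types (a : rel T) (F : {set T * T}).

Definition arc_rel F : rel T := fun x y => (x, y) \in F.

Definition is_root F v := forall u, (u, v) \notin F.

Lemma dtree_faceP a F :
  dtree_face a F <->
  [/\ forall u v, (u, v) \in F -> a u v,
      forall u1 u2 v, (u1, v) \in F -> (u2, v) \in F -> u1 = u2 &
      forall u v, (u, v) \in F -> ~~ connect (arc_rel F) v u].
Proof.
split.
- case/and3P => sub /forallP ind /forall_inP acyc; split.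
  + by move=> u v /(subsetP sub); rewrite inE.
  + move=> u1 u2 v h1 h2; have /card_le1_eqP H := ind v.
    by have [] : (u1, v) = (u2, v) by apply: H; rewrite !inE ?h1 ?h2 eqxx.
  + by move=> u v uv; apply: (acyc (u, v)).
- case=> arcF inj acyc; apply/and3P; split.
  + by apply/subsetP => -[u v] uv; rewrite inE; apply: arcF.
  + apply/forallP => v; apply/card_le1_eqP => -[u1 v1] [u2 v2].
    rewrite !inE => /andP[h1 /eqP /= E1] /andP[h2 /eqP /= E2]; subst.
    by rewrite (inj _ _ _ h1 h2).
  + by apply/forall_inP => -[u v]; apply: acyc.
Qed.

Lemma acyclic_of_rank F (h : T -> nat) :
  (forall u v, (u, v) \in F -> h u < h v) ->
  forall u v, (u, v) \in F -> ~~ connect (arc_rel F) v u.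
Proof.
move=> incr u v uv; apply/negP => /connectP [p pth lst].
suff : h v <= h u by rewrite leqNgt incr.
elim: p v pth lst {uv} => [|z p IH] w /=; first by move=> _ ->.
by case/andP => wz pth lst; apply: leq_trans (ltnW (incr _ _ wz)) (IH _ pth lst).
Qed.

Lemma connect_subset F F' x y :
  F \subset F' -> connect (arc_rel F) x y -> connect (arc_rel F') x y.
Proof. by move=> sub; apply: connect_sub => u v uv; apply/connect1/(subsetP sub). Qed.

Lemma connect_root_eq F v x : is_root F v -> connect (arc_rel F) x v -> x = v.
Proof.
move=> rv /connectP [p]; case/lastP: p => [|q z] /=; first by move=> _ ->.
rewrite rcons_path last_rcons => /andP[_ qz] E; subst z.
by have := rv (last x q); rewrite [_ \in _]qz.
Qed.

(* In-degree at most one: the walk into w is unique, so it starts at a unique root. *)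
Lemma connect_roots_eq a F r1 r2 w : dtree_face a F ->
  is_root F r1 -> is_root F r2 ->
  connect (arc_rel F) r1 w -> connect (arc_rel F) r2 w -> r1 = r2.
Proof.
case/dtree_faceP => _ inj _ rr1 rr2 /connectP [p].
elim/last_ind: p w => [|q z IH] w /=; first by move=> _ -> /(connect_root_eq rr1).
rewrite rcons_path last_rcons => /andP[pq qz] -> {w} /connectP [s].
case/lastP: s => [|s z'] /=.
  by move=> _ E; subst z; have := rr2 (last r1 q); rewrite [_ \in _]qz.
rewrite rcons_path last_rcons => /andP[ps sz] E; subst z'.
apply: (IH _ pq erefl); rewrite (inj _ _ _ qz sz).
by apply/connectP; exists s.
Qed.

Lemma connect_setU1 F u v x y : connect (arc_rel ((u, v) |: F)) x y ->
  connect (arc_rel F) x y \/ connect (arc_rel F) x u /\ connect (arc_rel F) v y.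
Proof.
case/connectP => p; elim: p x => [|z p IH] x /=; first by move=> _ ->; left.
case/andP => xz pth /(IH _ pth) {}IH; rewrite /arc_rel in_setU1 in xz.
case/orP: xz => [/eqP[-> zv]|xz].
  by subst z; case: IH => [|[_]] vy; right; split=> //; apply: connect0.
case: IH => [zy|[zu vy]]; [left|right; split=> //];
  exact: connect_trans (connect1 xz) _.
Qed.

Lemma dtree_face_setU1 a F u v : dtree_face a F -> a u v -> is_root F v ->
  ~~ connect (arc_rel F) v u -> dtree_face a ((u, v) |: F).
Proof.
case/dtree_faceP => arcF inj acyc auv rv nvu; apply/dtree_faceP; split.
- by move=> x y; rewrite in_setU1 => /orP[/eqP[-> ->] //|]; apply: arcF.
- move=> x1 x2 y; rewrite !in_setU1.
  case/orP=> [/eqP[-> ->]|h1] /orP[|h2].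
  + by case/eqP=> ->.
  + by have := rv x2; rewrite h2.
  + by case/eqP=> _ yv; subst y; have := rv x1; rewrite h1.
  + exact: inj h1 h2.
- move=> x y xy; apply/negP => /connect_setU1 [yx|[yu vx]].
  + case/setU1P: xy => [[? ?]|xy]; first by subst; rewrite yx in nvu.
    by have := acyc _ _ xy; rewrite yx.
  + case/setU1P: xy => [[? ?]|xy]; first by subst; rewrite yu in nvu.
    by rewrite (connect_trans vx (connect_trans (connect1 xy) yu)) in nvu.
Qed.

Lemma maximal_face_connect a F u v :
  maximal_face a F -> a u v -> is_root F v -> connect (arc_rel F) v u.
Proof.
case=> faceF maxF auv rv; apply/idPn => nvu.
have /setP/(_ (u, v)) := maxF _ (dtree_face_setU1 faceF auv rv nvu) (subsetUr _ _).
by rewrite setU11 => /esym; apply/negP/rv.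
Qed.

Lemma face_extends_maximal a F0 :
  dtree_face a F0 -> exists2 F, maximal_face a F & F0 \subset F.
Proof.
move=> faceF0; pose P F := dtree_face a F && (F0 \subset F).
have [F /andP[faceF sub] maxF] := @arg_maxnP _ F0 P (fun F => #|F|)
  (introT andP (conj faceF0 (subxx F0))).
exists F => //; split => // F' faceF' sF; apply/eqP; rewrite eq_sym eqEcard sF.
by apply: maxF; rewrite /P faceF' (subset_trans sub sF).
Qed.

(* Minimise the number of F-ancestors among the F-ancestors of v. *)
Lemma face_root_connect a F v : dtree_face a F ->
  exists2 r, is_root F r & connect (arc_rel F) r v.
Proof.
case/dtree_faceP => _ _ acyc; pose anc w := [set z | connect (arc_rel F) z w].
have [r rv minr] := @arg_minnP _ v (fun w => connect (arc_rel F) w v)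
  (fun w => #|anc w|) (connect0 _ v).
exists r => // u; apply/negP => ur; suff : #|anc u| < #|anc r|.
  by rewrite ltnNge minr // (connect_trans (connect1 ur) rv).
apply/proper_card/properP; split.
  by apply/subsetP => w; rewrite !inE => wu; apply: connect_trans wu (connect1 ur).
by exists r; rewrite !inE ?connect0 ?(acyc _ _ ur).
Qed.

Lemma root_of_out_arcs a F v : symmetric a -> dtree_face a F ->
  (forall u, a v u -> (v, u) \in F) -> is_root F v.
Proof.
move=> sym /dtree_faceP[arcF _ acyc] out u; apply/negP => uv.
have vu := out _ (etrans (sym v u) (arcF _ _ uv)).
by have := acyc _ _ uv; rewrite (connect1 vu).
Qed.

Lemma card_face_heads a F : dtree_face a F -> #|F| = #|[set uv.2 | uv in F]|.
Proof.
case/dtree_faceP => _ inj _; rewrite card_in_imset // => -[u1 v1] [u2 v2] h1 h2 /= E.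
by subst; rewrite (inj _ _ _ h1 h2).
Qed.

Lemma card_face_roots a F (R : {set T}) : dtree_face a F ->
  (forall r, r \in R -> is_root F r) -> #|F| <= #|T| - #|R|.
Proof.
move=> faceF rootR; rewrite (card_face_heads faceF).
have -> : #|T| - #|R| = #|~: R| by rewrite [in RHS]cardsCs setCK.
apply/subset_leq_card/subsetP => v /imsetP [[u w] uw /= ->]; rewrite inE.
by apply/negP => /rootR /(_ u); rewrite uw.
Qed.

Lemma card_face_spanning a F r : dtree_face a F -> is_root F r ->
  (forall v, connect (arc_rel F) r v) -> #|F| = #|T|.-1.
Proof.
move=> faceF rr reach; apply/eqP; rewrite eqn_leq; apply/andP; split.
  have := card_face_roots faceF (R := [set r]); rewrite cards1 subn1; apply.
  by move=> v; rewrite inE => /eqP ->.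
rewrite (card_face_heads faceF) -(cardsC1 r) subset_leq_card //.
apply/subsetP => v; rewrite inE => vr; have /connectP [p] := reach v.
case/lastP: p => [|q z] /=; first by move=> _ E; move: vr; rewrite E !inE eqxx.
by rewrite rcons_path last_rcons => /andP[_ qz] ->; apply/imsetP; exists (last r q, z).
Qed.

End DirectedForests.

Section Graphs.
Variables (T : finType) (e : rel T).

Lemma connect_exit (S : {set T}) x y : connect e x y -> x \in S -> y \notin S ->
  exists u v, [/\ e u v, u \in S & v \notin S].
Proof.
case/connectP => p; elim: p x => [|z p IH] x /=; first by move=> _ -> ->.
case/andP => xz pth lst xS yS; case: (boolP (z \in S)) => zS.
  exact: IH pth lst zS yS.
by exists x, z.
Qed.

Lemma dist_le2P x y :
  dist_le e x y 2 <-> [\/ x = y, e x y | exists w, e x w && e w y].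
Proof.
split.
- case=> p [pth <-]; case: p pth => [|z [|w [|]]] //=; first by move=> _ _; apply: Or31.
  + by rewrite andbT => xz _; apply: Or32.
  + by case/and3P => xz zw _ _; apply: Or33; exists z; rewrite xz.
- case=> [<-|xy|[w /andP[xw wy]]]; first by exists [::].
  + by exists [:: y]; rewrite /= xy.
  + by exists [:: w; y]; rewrite /= xw wy.
Qed.

Definition rooted_face x F :=
  [&& dtree_face e F, [forall w, (w, x) \notin F] &
      [forall uv in F, connect (arc_rel F) x uv.1]].

(* Growing an arborescence along an edge leaving the set of vertices it reaches. *)
Lemma rooted_face_grow x F : connected_graph e -> rooted_face x F ->
  forall v, ~~ connect (arc_rel F) x v ->
  exists2 F', rooted_face x F' & #|F| < #|F'|.
Proof.
move=> conn /and3P[faceF /forallP rootx /forall_inP reach] v nxv.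
pose S := [set w | connect (arc_rel F) x w].
have [u [w []]] : exists u w, [/\ e u w, u \in S & w \notin S].
  by apply: connect_exit (conn x v) _ _; rewrite !inE ?connect0.
rewrite !inE => euw xu xw.
have rw : is_root F w.
  move=> z; apply/negP => zw.
  by rewrite (connect_trans (reach _ zw) (connect1 zw)) in xw.
have nwu : ~~ connect (arc_rel F) w u.
  apply/negP => wu; have E := connect_roots_eq faceF rw rootx wu xu.
  by rewrite E connect0 in xw.
have sub : F \subset (u, w) |: F by apply: subsetUr.
exists ((u, w) |: F); last by rewrite cardsU1 rw.
apply/and3P; split; first exact: dtree_face_setU1.
  apply/forallP => z; rewrite in_setU1 negb_or rootx andbT.
  by apply/eqP => -[_ E]; rewrite -E connect0 in xw.
apply/forall_inP => -[z1 z2]; rewrite in_setU1 => /orP[/eqP[-> _]|z12].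
  exact: connect_subset sub xu.
exact: connect_subset sub (reach _ z12).
Qed.

Lemma spanning_maximal_face (x : T) : connected_graph e ->
  exists2 F, maximal_face e F & #|F| = #|T|.-1.
Proof.
move=> conn.
have rooted0 : rooted_face x set0.
  apply/and3P; split; last by apply/forall_inP => uv; rewrite inE.
    by apply/dtree_faceP; split=> [u v|u1 u2 v|u v]; rewrite inE.
  by apply/forallP => w; rewrite inE.
have [F rootedF maxF] := @arg_maxnP _ set0 (rooted_face x) (fun F => #|F|) rooted0.
have reach v : connect (arc_rel F) x v.
  apply/idPn => /(rooted_face_grow conn rootedF) [F' /maxF le lt].
  by have := leq_ltn_trans le lt; rewrite ltnn.
case/and3P: rootedF => faceF /forallP rootx _.
have cardF := card_face_spanning faceF rootx reach.
exists F => //; split => // F' faceF' sub; apply/eqP; rewrite eq_sym eqEcard sub cardF.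
have [r rr _] := face_root_connect x faceF'.
rewrite -subn1 -(cards1 r); apply: card_face_roots faceF' _ => z.
by rewrite inE => /eqP ->.
Qed.

Lemma maximal_face_roots_eq F r1 r2 : symmetric e -> diam_le e 2 ->
  maximal_face e F -> is_root F r1 -> is_root F r2 -> r1 = r2.
Proof.
move=> sym diam maxF rr1 rr2.
have [//|e12|[w /andP[e1w ew2]]] := (dist_le2P r1 r2).1 (diam r1 r2).
  exact/esym/(connect_root_eq rr1)/(maximal_face_connect maxF e12 rr2).
apply: (connect_roots_eq (w := w) maxF.1 rr1 rr2).
  by apply: (maximal_face_connect maxF _ rr1); rewrite sym.
exact: maximal_face_connect maxF ew2 rr2.
Qed.

Lemma maximal_face_card F : symmetric e -> diam_le e 2 ->
  maximal_face e F -> #|F| = #|T|.-1.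
Proof.
move=> sym diam maxF; case: (pickP (@predT T)) => [x _|T0].
  have [r rr _] := face_root_connect x maxF.1.
  apply: (card_face_spanning maxF.1 rr) => v.
  have [r' rr' r'v] := face_root_connect v maxF.1.
  by rewrite (maximal_face_roots_eq sym diam maxF rr rr').
have cardT0 : #|T| = 0 by apply: eq_card0.
by have := max_card (mem F); rewrite card_prod cardT0 leqn0 => /eqP ->.
Qed.

(* When dist(x, y) > 2 the out-stars of x and y form a face with roots x and y. *)
Lemma maximal_face_two_roots x y : symmetric e -> irreflexive e ->
  x != y -> ~~ e x y -> (forall w, ~~ (e x w && e w y)) ->
  exists2 F, maximal_face e F & #|F| < #|T|.-1.
Proof.
move=> sym irr nxy nexy nw; pose xy := [set x; y].
pose stars := [set uv | (uv.1 \in xy) && e uv.1 uv.2].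
have starsP u v : (u, v) \in stars -> [/\ u \in xy, v \notin xy & e u v].
  rewrite inE /= => /andP[uxy euv]; split=> //; move: uxy; rewrite !inE.
  case/orP=> /eqP Eu; subst u; apply/norP; split; apply/eqP => Ev; subst v.
  - by rewrite irr in euv.
  - by rewrite euv in nexy.
  - by rewrite sym euv in nexy.
  - by rewrite irr in euv.
have faceS : dtree_face e stars.
  apply/dtree_faceP; split=> [u v /starsP[] //|u1 u2 v|].
    move=> /starsP[+ _ e1] /starsP[+ _ e2]; rewrite !inE.
    by case/orP=> /eqP E1 /orP[]/eqP E2; subst u1 u2 => //;
      move: (nw v); rewrite ?e1 ?e2 sym ?e1 ?e2.
  by apply: (acyclic_of_rank (h := fun v => v \notin xy)) => u v /starsP[-> ->].
have [F maxF sub] := face_extends_maximal faceS.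
exists F => //; have rootxy r : r \in xy -> is_root F r.
  move=> rxy; apply: root_of_out_arcs sym maxF.1 _ => u eru.
  by apply: (subsetP sub); rewrite inE /= rxy eru.
have := card_face_roots maxF.1 rootxy; rewrite cards2 nxy.
have : #|xy| <= #|T| by apply: max_card.
rewrite cards2 nxy; lia.
Qed.

End Graphs.

Theorem mainTheorem5 (T : finType) (e : rel T) :
  simple_graph e -> connected_graph e ->
  (pure_dtree_complex e <-> diam_le e 2).
Proof.
move=> [sym irr] conn; split=> [pure x y|diam F1 F2 max1 max2]; last first.
  by rewrite !(maximal_face_card sym diam).
apply/dist_le2P; case: (eqVneq x y) => [|nxy]; first exact: Or31.
have [exy|nexy] := boolP (e x y); first exact: Or32.
have [/existsP|/existsPn nw] := boolP [exists w, e x w && e w y]; first exact: Or33.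
have [F maxF ltF] := maximal_face_two_roots sym irr nxy nexy nw.
have [F' maxF' cardF'] := spanning_maximal_face x conn.
by rewrite (pure _ _ maxF maxF') cardF' ltnn in ltF.
Qed.
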